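(* Let $\operatorname{R}_4=\{a_0,a_1,a_2,a_3\}$ be the dihedral quandle of order $4$, with $a_ia_j=a_{2j-i \pmod 4}$. Then the set of non-zero idempotents of $\mathbb{Z}[\operatorname{R}_4]$ is $$I(\mathbb{Z}[\operatorname{R}_4])=\Big\{t\big(a_0+\alpha(a_2-a_0)\big)+(1-t)\big(a_1+\beta(a_3-a_1)\big)~|~t\in\{0,1\},~\alpha,\beta\in\mathbb{Z}\Big\}.$$
   Context: For a quandle $Q$, the quandle ring $\mathbb{Z}[Q]$ is the free abelian group with basis $Q$, with multiplication $\big(\sum_i\alpha_i q_i\big)\big(\sum_j\beta_j q_j\big)=\sum_{i,j}\alpha_i\beta_j (q_iq_j)$. $I(\mathbb{Z}[Q])$ denotes the set of non-zero elements $w$ with $w^2=w$. *)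

From HB Require Import structures.
From mathcomp Require Import all_boot all_order all_algebra.
Set Implicit Arguments. Unset Strict Implicit. Unset Printing Implicit Defensive.
Import GRing.Theory Num.Theory.
Local Open Scope ring_scope.

Definition r4op (i j : 'I_4) : 'I_4 := inZp (2 * j + (4 - i))%N.

(* The quandle ring Z[R_4]: elements are integer coefficient vectors
   indexed by the basis R_4. *)
Definition ZR4 := {ffun 'I_4 -> int}.

(* (sum_i x_i a_i)(sum_j y_j a_j) = sum_{i,j} x_i y_j (a_i a_j) *)
Definition qmul (u v : ZR4) : ZR4 :=
  [ffun k => \sum_(i < 4) \sum_(j < 4) (if r4op i j == k then u i * v j else 0)].

Definition qa (i : 'I_4) : ZR4 := [ffun k => ((k == i) : nat)%:Z].

Definition is_nz_idem (w : ZR4) : Prop := w != 0 /\ qmul w w = w.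

From mathcomp Require Import all_boot all_order all_algebra zify ring.
Import GRing.Theory.
Set Implicit Arguments.
Local Open Scope ring_scope.

(* In R_4 one has a_i a_j = a_i when i and j have the same parity and
   a_i a_j = a_(i+2) otherwise.  Hence the coefficient sums s and o of an
   element over the two orbits {a_0, a_2} and {a_1, a_3} satisfy
   s(uv) = s(u) e(v) and o(uv) = o(u) e(v), where e = s + o is the
   augmentation.  For an idempotent w = sum x_i a_i this forces
   e(w) = e(w)^2; e(w) = 0 makes every coefficient of w = w^2 vanish, and
   when e(w) = 1 the idempotency equations reduce to
   (1 - s)(x_0 - x_2) = 0 and s(x_1 - x_3) = 0.  Then s = 0 or s = 1,
   since otherwise e(w) = 2(x_0 + x_1) would be even, and these two cases
   are the two halves of the family. *)

Lemma r4opK (j : 'I_4) : involutive (r4op^~ j).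
Proof. by case=> -[|[|[|[|//]]]] ?; case: j => -[|[|[|[|//]]]] ?; apply/val_inj. Qed.

Lemma r4op_inord (m n : nat) : (m < 4)%N -> (n < 4)%N ->
  r4op (inord m) (inord n) = inord ((2 * n + (4 - m)) %% 4).
Proof. by move=> lt_m4 lt_n4; apply/val_inj; rewrite /= !inordK // ltn_pmod. Qed.

Lemma big_ord4 (F : 'I_4 -> int) :
  \sum_(j < 4) F j = F (inord 0) + F (inord 1) + F (inord 2) + F (inord 3).
Proof.
rewrite !big_ord_recl big_ord0 addr0 !addrA.
by congr (F _ + F _ + F _ + F _); apply/val_inj; rewrite /= inordK.
Qed.

Lemma ZR4_ext (u v : ZR4) :
  u (inord 0) = v (inord 0) -> u (inord 1) = v (inord 1) ->
  u (inord 2) = v (inord 2) -> u (inord 3) = v (inord 3) -> u = v.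
Proof.
move=> eq0 eq1 eq2 eq3; apply/ffunP => k.
by rewrite -(inord_val k); case: k => -[|[|[|[|//]]]].
Qed.

Lemma qmulE (u v : ZR4) (k : 'I_4) : qmul u v k = \sum_(j < 4) u (r4op k j) * v j.
Proof.
rewrite ffunE exchange_big; apply: eq_bigr => j _.
rewrite -big_mkcond (big_pred1 (r4op k j)) // => i /=.
by apply/eqP/eqP => [<-|->]; rewrite r4opK.
Qed.

Definition even_wt (u : ZR4) : int := u (inord 0) + u (inord 2).
Definition odd_wt (u : ZR4) : int := u (inord 1) + u (inord 3).

Lemma qmul_coord0 (u v : ZR4) :
  qmul u v (inord 0) = u (inord 0) * even_wt v + u (inord 2) * odd_wt v.
Proof. by rewrite qmulE big_ord4 !r4op_inord // /even_wt /odd_wt; ring. Qed.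

Lemma qmul_coord1 (u v : ZR4) :
  qmul u v (inord 1) = u (inord 1) * odd_wt v + u (inord 3) * even_wt v.
Proof. by rewrite qmulE big_ord4 !r4op_inord // /even_wt /odd_wt; ring. Qed.

Lemma qmul_coord2 (u v : ZR4) :
  qmul u v (inord 2) = u (inord 2) * even_wt v + u (inord 0) * odd_wt v.
Proof. by rewrite qmulE big_ord4 !r4op_inord // /even_wt /odd_wt; ring. Qed.

Lemma qmul_coord3 (u v : ZR4) :
  qmul u v (inord 3) = u (inord 3) * odd_wt v + u (inord 1) * even_wt v.
Proof. by rewrite qmulE big_ord4 !r4op_inord // /even_wt /odd_wt; ring. Qed.

Definition qmul_coordE := (qmul_coord0, qmul_coord1, qmul_coord2, qmul_coord3).

Definition aug (u : ZR4) : int := even_wt u + odd_wt u.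

Lemma even_wt_qmul (u v : ZR4) : even_wt (qmul u v) = even_wt u * aug v.
Proof. by rewrite /aug /even_wt /odd_wt !qmul_coordE /even_wt /odd_wt; ring. Qed.

Lemma odd_wt_qmul (u v : ZR4) : odd_wt (qmul u v) = odd_wt u * aug v.
Proof. by rewrite /aug /even_wt /odd_wt !qmul_coordE /even_wt /odd_wt; ring. Qed.

Lemma aug_qmul (u v : ZR4) : aug (qmul u v) = aug u * aug v.
Proof. by rewrite {1}/aug even_wt_qmul odd_wt_qmul -mulrDl. Qed.

Section Idempotent.

Variable w : ZR4.
Hypothesis w_idem : qmul w w = w.

Lemma idem_aug : aug w * (aug w - 1) = 0.
Proof. by rewrite mulrBr mulr1 -aug_qmul w_idem subrr. Qed.

Lemma idem_aug0 : aug w = 0 -> w = 0.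
Proof.
move=> aug0; have := even_wt_qmul w w; have := odd_wt_qmul w w.
rewrite w_idem aug0 !mulr0 => o0 e0.
by apply: ZR4_ext; rewrite ffunE -w_idem !qmul_coordE e0 o0 !mulr0 addr0.
Qed.

Lemma idem_aug1 : aug w = 1 ->
  (1 - even_wt w) * (w (inord 0) - w (inord 2)) = 0 /\
  even_wt w * (w (inord 1) - w (inord 3)) = 0.
Proof.
move=> aug1; have o_def : odd_wt w = 1 - even_wt w by rewrite -aug1 /aug addrAC subrr add0r.
split.
- transitivity (w (inord 0) - qmul w w (inord 0)); last by rewrite w_idem subrr.
  by rewrite qmul_coord0 o_def; ring.
- transitivity (w (inord 1) - qmul w w (inord 1)); last by rewrite w_idem subrr.
  by rewrite qmul_coord1 o_def; ring.
Qed.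

End Idempotent.

Definition idem_family (t alpha beta : int) : ZR4 :=
  (qa (inord 0) + (qa (inord 2) - qa (inord 0)) *~ alpha) *~ t
  + (qa (inord 1) + (qa (inord 3) - qa (inord 1)) *~ beta) *~ (1 - t).

Lemma inord4_eq (m n : nat) : (m < 4)%N -> (n < 4)%N ->
  (inord m == inord n :> 'I_4) = (m == n).
Proof. by move=> lt_m4 lt_n4; rewrite -(inj_eq val_inj) /= !inordK. Qed.

Lemma idem_family0 t alpha beta : idem_family t alpha beta (inord 0) = (1 - alpha) * t.
Proof. by rewrite /idem_family !(ffunE, ffunMzE) /qa ?ffunE !inord4_eq //= !mulrzz; ring. Qed.

Lemma idem_family1 t alpha beta : idem_family t alpha beta (inord 1) = (1 - beta) * (1 - t).
Proof. by rewrite /idem_family !(ffunE, ffunMzE) /qa ?ffunE !inord4_eq //= !mulrzz; ring. Qed.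

Lemma idem_family2 t alpha beta : idem_family t alpha beta (inord 2) = alpha * t.
Proof. by rewrite /idem_family !(ffunE, ffunMzE) /qa ?ffunE !inord4_eq //= !mulrzz; ring. Qed.

Lemma idem_family3 t alpha beta : idem_family t alpha beta (inord 3) = beta * (1 - t).
Proof. by rewrite /idem_family !(ffunE, ffunMzE) /qa ?ffunE !inord4_eq //= !mulrzz; ring. Qed.

Definition idem_familyE := (idem_family0, idem_family1, idem_family2, idem_family3).

Lemma aug_idem_family t alpha beta : aug (idem_family t alpha beta) = 1.
Proof. by rewrite /aug /even_wt /odd_wt !idem_familyE; ring. Qed.

Lemma idem_family_nz_idem t alpha beta :
  t = 0 \/ t = 1 -> is_nz_idem (idem_family t alpha beta).
Proof.
move=> t01; split.
- apply/eqP => fam0; have := aug_idem_family t alpha beta.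
  by rewrite fam0 /aug /even_wt /odd_wt !ffunE.
- apply: ZR4_ext; rewrite !qmul_coordE /even_wt /odd_wt !idem_familyE.
  all: by case: t01 => ->; ring.
Qed.

Lemma nz_idem_in_family w : is_nz_idem w ->
  exists t alpha beta, (t = 0 \/ t = 1) /\ w = idem_family t alpha beta.
Proof.
case=> w_nz w_idem; have /eqP := idem_aug w_idem.
rewrite mulf_eq0 => /orP[/eqP/(idem_aug0 w_idem) w0 | ]; first by rewrite w0 eqxx in w_nz.
rewrite subr_eq0 => /eqP aug1; have [/eqP eq_even /eqP eq_odd] := idem_aug1 w_idem aug1.
move: eq_even eq_odd aug1; rewrite !mulf_eq0 /aug /even_wt /odd_wt.
case/orP=> /eqP eq_even; case/orP=> /eqP eq_odd aug1; try by exfalso; lia.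
- exists 1, (w (inord 2)), 0; split; first by right.
  by apply: ZR4_ext; rewrite !idem_familyE; lia.
- exists 0, 0, (w (inord 3)); split; first by left.
  by apply: ZR4_ext; rewrite !idem_familyE; lia.
Qed.

Theorem proposition4p4 (w : ZR4) :
  is_nz_idem w <->
  exists (t alpha beta : int), (t = 0 \/ t = 1) /\
    w = (qa (inord 0) + (qa (inord 2) - qa (inord 0)) *~ alpha) *~ t
        + (qa (inord 1) + (qa (inord 3) - qa (inord 1)) *~ beta) *~ (1 - t).
Proof.
split; first exact: (@nz_idem_in_family w).
by case=> t [alpha [beta [t01 ->]]]; exact: (idem_family_nz_idem alpha beta t01).
Qed.
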